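(* Let $0<q<1$ and define monic polynomials by $p_{-1}=0$, $p_0=1$, $p_{n+1}(x)=(x-b_n)p_n(x)-\lambda_np_{n-1}(x)$ with $$b_n=q^{n+1}[n+1]_q+q^{n-1}[n]_q,\qquad \lambda_n=q^{2n-1}[n]_q^2.$$ Let $\mu$ be the discrete probability measure on $\mathbb R$ with mass $q^{i}(q;q)_\infty/(q;q)_{i-1}$ at the point $q^{i-1}/(1-q)$ for each $i\ge1$, and mass $1-q$ at $0$. Then the $p_n$ are orthogonal with respect to $\mu$ (i.e. $\int p_mp_n\,d\mu=0$ for $m\ne n$), and the moments of $\mu$ are $\mu_0=1$ and $\mu_n=\int x^n\,d\mu=q\,[n]_q!$ for $n\ge1$.
   Context: $[n]_q=\frac{1-q^n}{1-q}$, $[n]_q!=[n]_q\cdots[1]_q$, $(q;q)_k=\prod_{j=1}^{k}(1-q^j)$ (with $(q;q)_0=1$) and $(q;q)_\infty=\prod_{j\ge1}(1-q^j)$. *)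

From mathcomp Require Import all_boot all_order all_algebra.
From mathcomp Require Import all_classical all_reals all_analysis.
Set Implicit Arguments. Unset Strict Implicit. Unset Printing Implicit Defensive.
Import Order.TTheory GRing.Theory Num.Theory.
Import numFieldNormedType.Exports.
Local Open Scope classical_set_scope.
Local Open Scope ring_scope.

Section QDefs.
Variable R : realType.

Definition qint (q : R) (n : nat) : R := (1 - q ^+ n) / (1 - q).
Definition qfact (q : R) (n : nat) : R := \prod_(i < n) qint q i.+1.
Definition qpoch (q : R) (k : nat) : R := \prod_(j < k) (1 - q ^+ j.+1).
Definition qpoch_inf (q : R) : R := lim (qpoch q @ \oo).

Definition bcoef (q : R) (n : nat) : R :=
  q ^+ n.+1 * qint q n.+1 + q ^+ n.-1 * qint q n.
(* note: for n = 0 the second term is q^{-1}[0]_q = 0; we use q^0 * [0]_q = 0 *)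
Definition lcoef (q : R) (n : nat) : R := q ^+ (2 * n).-1 * (qint q n) ^+ 2.
(* for n = 0, lambda_0 multiplies p_{-1} = 0, so its value is irrelevant *)

(* ppair n = (p_{n-1}, p_n) *)
Fixpoint ppair (q : R) (n : nat) : {poly R} * {poly R} :=
  match n with
  | 0 => (0, 1)
  | n'.+1 => let pr := ppair q n' in
      (pr.2, ('X - (bcoef q n')%:P) * pr.2 - (lcoef q n')%:P * pr.1)
  end.
Definition opoly (q : R) (n : nat) : {poly R} := (ppair q n).2.

(* The measure mu: for k >= 0 (k = i - 1), mass q^(k+1) (q;q)_oo/(q;q)_k
   at the point q^k/(1-q); and mass (1 - q) at 0. *)
Definition mu_mass (q : R) (k : nat) : R := q ^+ k.+1 * qpoch_inf q / qpoch q k.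
Definition mu_point (q : R) (k : nat) : R := q ^+ k / (1 - q).

Definition mu_partial (q : R) (f : R -> R) (N : nat) : R :=
  (1 - q) * f 0 + \sum_(k < N) mu_mass q k * f (mu_point q k).
Definition mu_abs_partial (q : R) (f : R -> R) (N : nat) : R :=
  `|1 - q| * `|f 0| + \sum_(k < N) `|mu_mass q k * f (mu_point q k)|.

Definition mu_integral_is (q : R) (f : R -> R) (v : R) : Prop :=
  cvg (mu_abs_partial q f @ \oo) /\ mu_partial q f @ \oo --> v.

End QDefs.

(* Under the moment functional of mu, x^j goes to
   (1 - q) 0^j + q (q;q)_oo / (1 - q)^j * sum_k (q^(j+1))^k / (q;q)_k, and Euler's
   identity sum_k z^k / (q;q)_k = 1 / (z;q)_oo at z = q^(j+1) turns this into
   q [j]_q! for j >= 1 (and 1 for j = 0).  The limit (q;q)_oo is positive by the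
   Weierstrass product inequality, so polynomials are mu-integrable and integrate
   to the linear functional with these moments.
   For orthogonality, L(x^k p_n) with L(x^i) = [i]_q! has a closed form that is
   propagated by the three-term recurrence; it vanishes for 0 < k < n, and for
   k = 0 the term q L(p_n) exactly cancels the contribution (1 - q) p_n(0) of the
   atom at 0.  Hence mu kills x^k p_n for k < n, i.e. p_n is orthogonal to every
   polynomial of lower degree. *)

From mathcomp Require Import all_boot all_order all_algebra.
From mathcomp Require Import all_classical all_reals all_analysis.
From mathcomp Require Import ring lra zify.
Import Order.TTheory GRing.Theory Num.Theory.
Import numFieldNormedType.Exports.
Local Open Scope classical_set_scope.
Local Open Scope ring_scope.

Section MomentFunctional.
Context {R : nzRingType} (m : nat -> R).

Definition moment_fun (p : {poly R}) : R := \sum_(i < size p) p`_i * m i.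

Lemma moment_fun_widen n (p : {poly R}) :
  (size p <= n)%N -> \sum_(i < n) p`_i * m i = moment_fun p.
Proof.
move=> le_p_n; rewrite /moment_fun (big_ord_widen n (fun i => p`_i * m i) le_p_n).
rewrite [RHS]big_mkcond /=; apply: eq_bigr => i _; case: ltnP => // /(nth_default 0).
by move->; rewrite mul0r.
Qed.

Lemma moment_fun0 : moment_fun 0 = 0.
Proof. by rewrite /moment_fun size_poly0 big_ord0. Qed.

Lemma moment_funD (p r : {poly R}) : moment_fun (p + r) = moment_fun p + moment_fun r.
Proof.
set n := maxn (size p) (size r).
rewrite -(@moment_fun_widen n p) ?leq_maxl // -(@moment_fun_widen n r) ?leq_maxr //.
rewrite -(@moment_fun_widen n) ?size_polyD // -big_split /=.
by apply: eq_bigr => i _; rewrite coefD mulrDl.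
Qed.

Lemma moment_funZ c (p : {poly R}) : moment_fun (c *: p) = c * moment_fun p.
Proof.
rewrite -(@moment_fun_widen (size p)) ?size_scale_leq // mulr_sumr.
by apply: eq_bigr => i _; rewrite coefZ mulrA.
Qed.

Lemma moment_funB (p r : {poly R}) : moment_fun (p - r) = moment_fun p - moment_fun r.
Proof. by rewrite -scaleN1r moment_funD moment_funZ mulN1r. Qed.

Lemma moment_fun_sum n (F : 'I_n -> {poly R}) :
  moment_fun (\sum_(i < n) F i) = \sum_(i < n) moment_fun (F i).
Proof. exact: (big_morph _ moment_funD moment_fun0). Qed.

Lemma moment_funXn i : moment_fun 'X^i = m i.
Proof.
rewrite /moment_fun size_polyXn big_ord_recr /= coefXn eqxx mul1r big1 ?add0r //.
by move=> j _; rewrite coefXn ltn_eqF // mul0r.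
Qed.

Lemma moment_fun_mul_eq0 (p r : {poly R}) n :
  (forall k, (k < n)%N -> moment_fun ('X^k * r) = 0) ->
  (size p <= n)%N -> moment_fun (p * r) = 0.
Proof.
move=> kill le_p_n; rewrite -[p]coefK poly_def mulr_suml moment_fun_sum big1 //.
by move=> i _; rewrite -scalerAl moment_funZ kill ?mulr0 // (leq_trans _ le_p_n).
Qed.

End MomentFunctional.

Lemma prod_1subr_ge (R : realDomainType) n (a : nat -> R) :
  (forall i, 0 <= a i <= 1) ->
  1 - \sum_(i < n) a i <= \prod_(i < n) (1 - a i).
Proof.
move=> a01; elim: n => [|n IH]; first by rewrite big_ord0 big_ord0 subr0.
have [a_ge0 a_le1] := andP (a01 n).
have P_le1 : \prod_(i < n) (1 - a i) <= 1.
  apply: prodr_ile1 => i _; have /andP[ai_ge0 ai_le1] := a01 i.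
  by rewrite subr_ge0 ai_le1 lerBlDr lerDl.
have Pa_le : \prod_(i < n) (1 - a i) * a n <= a n by rewrite ler_piMl.
rewrite !big_ord_recr /= mulrBr mulr1; lra.
Qed.

Lemma prod_qshift (R : comPzRingType) (q t : R) m :
  \prod_(j < m.+1) (q * t - q ^+ j.+1) =
  q ^+ m.+1 * ((t - 1) * \prod_(j < m) (t - q ^+ j.+1)).
Proof.
rewrite (eq_bigr (fun j : 'I_m.+1 => q * (t - q ^+ j))); last first.
  by move=> j _; rewrite exprS mulrBr.
by rewrite big_split /= prodr_const card_ord big_ord_recl /= expr0.
Qed.

Section QMoments.
Variables (R : realType) (q : R).
Hypotheses (q_gt0 : 0 < q) (q_lt1 : q < 1).

Let q_neq0 : q != 0. Proof. by rewrite gt_eqF. Qed.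
Let subq_gt0 : 0 < 1 - q. Proof. by rewrite subr_gt0. Qed.
Let subq_neq0 : 1 - q != 0. Proof. by rewrite gt_eqF. Qed.

(** * The q-Pochhammer symbol and Euler's identity *)

Lemma expq_ge0 k : 0 <= q ^+ k.
Proof. by rewrite exprn_ge0 // ltW. Qed.

Lemma expq_le1 k : q ^+ k <= 1.
Proof. by rewrite exprn_ile1 // ltW. Qed.

Lemma qfactS k : qfact q k.+1 = qfact q k * qint q k.+1.
Proof. by rewrite /qfact big_ord_recr. Qed.

Lemma qpochS k : qpoch q k.+1 = qpoch q k * (1 - q ^+ k.+1).
Proof. by rewrite /qpoch big_ord_recr. Qed.

Lemma subr1_expqS_neq0 k : 1 - q ^+ k.+1 != 0.
Proof. by rewrite subr_eq0 eq_sym lt_eqF // exprn_ilt1 // ltW. Qed.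

Lemma qpoch_gt0 k : 0 < qpoch q k.
Proof. by apply: prodr_gt0 => i _; rewrite subr_gt0 exprn_ilt1 // ltW. Qed.

Lemma qpoch_neq0 k : qpoch q k != 0.
Proof. exact/lt0r_neq0/qpoch_gt0. Qed.

Lemma qfact_qpoch k : qfact q k = qpoch q k / (1 - q) ^+ k.
Proof.
elim: k => [|k IH]; first by rewrite /qfact /qpoch !big_ord0 expr0 divr1.
rewrite qfactS qpochS IH /qint [(1 - q) ^+ k.+1]exprSr.
by field; rewrite subq_neq0 expf_neq0.
Qed.

Lemma qpoch_nonincreasing : {homo qpoch q : m n / (m <= n)%N >-> n <= m}.
Proof.
apply/nonincreasing_seqP => k; rewrite qpochS ler_piMr ?(ltW (qpoch_gt0 k)) //.
by rewrite lerBlDr lerDl expq_ge0.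
Qed.

Lemma qpoch_shift J d :
  qpoch q (J + d) = qpoch q J * \prod_(i < d) (1 - q ^+ J.+1 * q ^+ i).
Proof.
elim: d => [|d IH]; first by rewrite addn0 big_ord0 mulr1.
by rewrite addnS qpochS IH big_ord_recr /= mulrA -exprD addSn.
Qed.

(* By the Weierstrass inequality the tail product is at least 1 - q^(J+1)/(1 - q). *)
Lemma qpoch_tail_ge J d : q ^+ J.+1 <= (1 - q) / 2 ->
  qpoch q J / 2 <= qpoch q (J + d).
Proof.
move=> small_tail; rewrite qpoch_shift.
have geom_sum : (1 - q) * \sum_(i < d) q ^+ i = 1 - q ^+ d.
  by apply: oppr_inj; rewrite opprB subrX1 -mulNr opprB.
have tail_ge : 1 / 2 <= \prod_(i < d) (1 - q ^+ J.+1 * q ^+ i).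
  have weierstrass := @prod_1subr_ge R d (fun i => q ^+ J.+1 * q ^+ i).
  apply: le_trans (weierstrass _) => [|i]; last first.
    by rewrite mulr_ge0 ?expq_ge0 // mulr_ile1 ?expq_ge0 ?expq_le1.
  have : 0 <= \sum_(i < d) q ^+ i by apply: sumr_ge0 => i _; exact: expq_ge0.
  have := expq_ge0 d.
  rewrite -mulr_sumr; move: geom_sum small_tail (expq_ge0 J.+1).
  move: (\sum_(i < d) _) (q ^+ d) (q ^+ J.+1) => S t a; nra.
by rewrite -[X in X / 2]mulr1 -mulrA ler_pM2l ?qpoch_gt0 // mulrC.
Qed.

Lemma qpoch_lbound : exists2 c, 0 < c & forall k, c <= qpoch q k.
Proof.
have q_norm_lt1 : `|q| < 1 by rewrite ger0_norm ?ltW.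
have [J _ small_J] := cvgr_lt _ (cvg_expr q_norm_lt1) _ (divr_gt0 subq_gt0 (ltr0Sn R 1)).
have small_tail : q ^+ J.+1 <= (1 - q) / 2.
  apply/ltW/(le_lt_trans _ (small_J J _)) => //=.
  by rewrite exprS ler_piMl ?expq_ge0 ?ltW.
exists (qpoch q J / 2); first by rewrite divr_gt0 ?qpoch_gt0.
move=> k; have [le_J_k|lt_k_J] := leqP J k.
  by rewrite -(subnKC le_J_k) qpoch_tail_ge.
rewrite (le_trans _ (qpoch_nonincreasing _ _ (ltnW lt_k_J))) // ler_pdivrMr //.
by rewrite ler_peMr ?(ltW (qpoch_gt0 J)) // ler1n.
Qed.

Lemma qpoch_cvg : qpoch q @ \oo --> qpoch_inf q.
Proof.
apply: nonincreasing_is_cvgn; first exact: qpoch_nonincreasing.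
by exists 0 => _ [k _ <-]; exact: ltW (qpoch_gt0 k).
Qed.

Lemma qpoch_inf_gt0 : 0 < qpoch_inf q.
Proof.
have [c c_gt0 c_le] := qpoch_lbound; apply: lt_le_trans c_gt0 _.
by apply: limr_ge; [exact: qpoch_cvg | exact: nearW].
Qed.

Definition euler_sum (z : R) (N : nat) : R := \sum_(k < N) z ^+ k / qpoch q k.

Lemma euler_sum_q N : euler_sum q N.+1 = (qpoch q N)^-1.
Proof.
elim: N => [|N IH].
  by rewrite /euler_sum big_ord1 /qpoch !big_ord0 expr0 invr1 mulr1.
rewrite /euler_sum big_ord_recr /= -/(euler_sum q N.+1) IH qpochS.
have := subr1_expqS_neq0 N; have := qpoch_neq0 N.
rewrite exprS; move: (qpoch q N) (q ^+ N) => P t P_neq0 t_neq0.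
by field; rewrite P_neq0 t_neq0.
Qed.

Lemma euler_sumM z N : euler_sum (z * q) N.+1 = euler_sum z N.+1 - z * euler_sum z N.
Proof.
rewrite /euler_sum !big_ord_recl mulr_sumr !expr0 -addrA; congr (_ + _).
rewrite -sumrB; apply: eq_bigr => k _; rewrite lift0 qpochS.
have := subr1_expqS_neq0 k; have := qpoch_neq0 k.
rewrite !exprS exprMn; move: (qpoch q k) (q ^+ k) (z ^+ k) => P t u P_neq0 t_neq0.
by field; rewrite P_neq0 t_neq0.
Qed.

Lemma euler_sum_cvg n : euler_sum (q ^+ n.+1) @ \oo --> qpoch q n / qpoch_inf q.
Proof.
have Pinf_neq0 := lt0r_neq0 qpoch_inf_gt0.
elim: n => [|n IH]; rewrite -cvg_shiftS.
  have -> : [sequence euler_sum (q ^+ 1) N.+1]_N = (fun N => (qpoch q N)^-1).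
    by apply/funext => N /=; rewrite expr1 euler_sum_q.
  by rewrite /qpoch big_ord0 mul1r; exact: cvgV Pinf_neq0 qpoch_cvg.
have -> : [sequence euler_sum (q ^+ n.+2) N.+1]_N =
    (fun N => euler_sum (q ^+ n.+1) N.+1 - q ^+ n.+1 * euler_sum (q ^+ n.+1) N).
  by apply/funext => N /=; rewrite exprSr euler_sumM.
have -> : qpoch q n.+1 / qpoch_inf q =
    qpoch q n / qpoch_inf q - q ^+ n.+1 * (qpoch q n / qpoch_inf q).
  by rewrite qpochS; field.
by apply: cvgB; [rewrite (cvg_shiftS (euler_sum _)) | exact: cvgMl_tmp].
Qed.

(** * Moments of mu *)

Definition mu_mom (i : nat) : R := if i is 0 then 1 else q * qfact q i.

Lemma mu_mass_ge0 k : 0 <= mu_mass q k.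
Proof.
rewrite /mu_mass divr_ge0 ?mulr_ge0 ?expq_ge0 //.
  exact: ltW qpoch_inf_gt0.
exact: ltW (qpoch_gt0 k).
Qed.

Lemma mu_point_ge0 k : 0 <= mu_point q k.
Proof. by rewrite /mu_point divr_ge0 ?expq_ge0 ?ltW. Qed.

Lemma mu_partial_sum n (c : nat -> R) (f : nat -> R -> R) N :
  mu_partial q (fun x => \sum_(i < n) c i * f i x) N =
  \sum_(i < n) c i * mu_partial q (f i) N.
Proof.
rewrite /mu_partial; under [RHS]eq_bigr do rewrite mulrDr.
rewrite big_split /= mulr_sumr; congr (_ + _).
  by apply: eq_bigr => i _; rewrite mulrCA.
under eq_bigr do rewrite mulr_sumr; under [RHS]eq_bigr do rewrite mulr_sumr.
by rewrite exchange_big; apply: eq_bigr => i _; apply: eq_bigr => k _; rewrite mulrCA.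
Qed.

Lemma mu_partial_le (f g : R -> R) N : (forall x, 0 <= x -> f x <= g x) ->
  mu_partial q f N <= mu_partial q g N.
Proof.
move=> le_fg; apply: lerD; first by rewrite ler_pM2l ?le_fg.
by apply: ler_sum => k _; apply/ler_wpM2l/le_fg/mu_point_ge0/mu_mass_ge0.
Qed.

Lemma mu_partial_nondecreasing (f : R -> R) : (forall x, 0 <= x -> 0 <= f x) ->
  {homo mu_partial q f : M N / (M <= N)%N >-> M <= N}.
Proof.
move=> f_ge0; apply/nondecreasing_seqP => N; rewrite /mu_partial big_ord_recr /=.
by rewrite addrA lerDl mulr_ge0 ?mu_mass_ge0 ?f_ge0 ?mu_point_ge0.
Qed.

Lemma mu_abs_partialE (f : R -> R) N :
  mu_abs_partial q f N = mu_partial q (fun x => `|f x|) N.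
Proof.
rewrite /mu_abs_partial /mu_partial ger0_norm ?(ltW subq_gt0) //; congr (_ + _).
by apply: eq_bigr => k _; rewrite normrM ger0_norm ?mu_mass_ge0.
Qed.

Lemma mu_partial_XnE i N : mu_partial q (fun x => x ^+ i) N =
  (1 - q) * 0 ^+ i + q * qpoch_inf q / (1 - q) ^+ i * euler_sum (q ^+ i.+1) N.
Proof.
rewrite /mu_partial /euler_sum mulr_sumr; congr (_ + _); apply: eq_bigr => k _.
rewrite /mu_mass /mu_point expr_div_n -!exprM mulnC mulSn exprD exprS.
have := qpoch_neq0 k; have : (1 - q) ^+ i != 0 by rewrite expf_neq0.
move: (qpoch q k) ((1 - q) ^+ i) => P c c_neq0 P_neq0.
by field; rewrite c_neq0 P_neq0.
Qed.

Lemma mu_partial_Xn_cvg i : mu_partial q (fun x => x ^+ i) @ \oo --> mu_mom i.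
Proof.
have -> : mu_mom i = (1 - q) * 0 ^+ i +
    q * qpoch_inf q / (1 - q) ^+ i * (qpoch q i / qpoch_inf q).
  have := lt0r_neq0 qpoch_inf_gt0; have : (1 - q) ^+ i != 0 by rewrite expf_neq0.
  case: i => [|i] c_neq0 Pinf_neq0 /=.
    by rewrite /qpoch big_ord0 expr0; field.
  by rewrite qfact_qpoch expr0n mulr0 add0r; field; rewrite Pinf_neq0 c_neq0.
rewrite (funext (mu_partial_XnE i)).
by apply: cvgD; [exact: cvg_cst | exact: cvgMl_tmp (euler_sum_cvg i)].
Qed.

Lemma mu_partial_Xn_le i N : mu_partial q (fun x => x ^+ i) N <= mu_mom i.
Proof.
rewrite -(cvg_lim _ (mu_partial_Xn_cvg i)) //.
apply: nondecreasing_cvgn_le; last exact: cvgP (mu_partial_Xn_cvg i).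
by apply: mu_partial_nondecreasing => x x_ge0; rewrite exprn_ge0.
Qed.

Lemma mu_abs_partial_poly_le (p : {poly R}) N :
  mu_abs_partial q (fun x => p.[x]) N <= \sum_(i < size p) `|p`_i| * mu_mom i.
Proof.
rewrite mu_abs_partialE.
apply: (le_trans (mu_partial_le _ (fun x => \sum_(i < size p) `|p`_i| * x ^+ i) N _)).
  move=> x x_ge0; rewrite horner_coef (le_trans (ler_norm_sum _ _ _)) //.
  by apply: ler_sum => i _; rewrite normrM (ger0_norm (exprn_ge0 i x_ge0)).
rewrite (mu_partial_sum _ (fun i => `|p`_i|) (fun i x => x ^+ i)).
by apply: ler_sum => i _; apply/ler_wpM2l/mu_partial_Xn_le.
Qed.

Lemma mu_integral_poly (p : {poly R}) :
  mu_integral_is q (fun x => p.[x]) (moment_fun mu_mom p).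
Proof.
split.
  apply: nondecreasing_is_cvgn; last first.
    exists (\sum_(i < size p) `|p`_i| * mu_mom i) => _ [N _ <-].
    exact: mu_abs_partial_poly_le.
  rewrite (_ : mu_abs_partial q _ = mu_partial q (fun x => `|p.[x]|)).
    by apply: mu_partial_nondecreasing => x _.
  by apply/funext => N; rewrite mu_abs_partialE.
rewrite (_ : mu_partial q _ =
    fun N => \sum_(i < size p) p`_i * mu_partial q (fun x => x ^+ i) N).
  apply: cvg_big => [|i _]; first exact: add_continuous.
  exact: cvgMl_tmp (mu_partial_Xn_cvg i).
apply/funext => N; rewrite -(mu_partial_sum _ (fun i => p`_i) (fun i x => x ^+ i)).
by congr mu_partial; apply/funext => x; rewrite horner_coef.
Qed.

Lemma mu_integral_Xn n : mu_integral_is q (fun x => x ^+ n) (mu_mom n).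
Proof.
rewrite -moment_funXn (_ : (fun x => x ^+ n) = fun x => ('X^n : {poly R}).[x]).
  exact: mu_integral_poly.
by apply/funext => x; rewrite hornerXn.
Qed.

(** * Orthogonality *)

Lemma moment_fun_mu_mom (p : {poly R}) :
  moment_fun mu_mom p = (1 - q) * p`_0 + q * moment_fun (qfact q) p.
Proof.
have le_p := leqnSn (size p).
rewrite -(moment_fun_widen _ _ _ le_p) -(moment_fun_widen _ _ _ le_p) !big_ord_recl /=.
rewrite /qfact big_ord0 mulr1 mulrDr addrA -mulrDl mulr_sumr subrK mul1r.
by congr (_ + _); apply: eq_bigr => i _; rewrite mulrCA.
Qed.

Lemma opoly1 : opoly q 1 = 'X - q%:P.
Proof.
rewrite /opoly /= mulr1 mulr0 subr0 /bcoef /qint !expr0 expr1 subrr mul0r mulr0.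
by rewrite addr0 divff // mulr1.
Qed.

Lemma opolySS n : opoly q n.+2 =
  ('X - (bcoef q n.+1)%:P) * opoly q n.+1 - (lcoef q n.+1)%:P * opoly q n.
Proof. by []. Qed.

Lemma size_opoly n : (size (opoly q n) <= n.+1)%N.
Proof.
elim/ltn_ind: n => -[|[|n]] IH; first by rewrite /opoly size_poly1.
  by rewrite opoly1 size_XsubC.
rewrite opolySS (leq_trans (size_polyD _ _)) // geq_max size_polyN mul_polyC.
have IHn := IH n (ltnW (ltnSn _)); have IHn1 := IH n.+1 (ltnSn _).
rewrite (leq_trans (size_polyMleq _ _)) ?size_XsubC ?add2n //=.
by apply: leq_trans (size_scale_leq _ _) (leq_trans IHn _); lia.
Qed.

Definition opoly_scale n : R := \prod_(i < n) (- q ^+ i.+1 / (1 - q)).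

Lemma opoly_scaleS n : opoly_scale n.+1 = opoly_scale n * (- q ^+ n.+1 / (1 - q)).
Proof. by rewrite /opoly_scale big_ord_recr. Qed.

Lemma opoly_horner0 n : (opoly q n).[0] = opoly_scale n * qpoch q n.
Proof.
elim/ltn_ind: n => -[|[|n]] IH.
- by rewrite /opoly hornerC /opoly_scale /qpoch !big_ord0 mulr1.
- rewrite opoly1 !hornerE /opoly_scale /qpoch !big_ord1 expr1.
  by field; rewrite subq_neq0.
rewrite opolySS hornerD hornerN !hornerM hornerXsubC !hornerC IH // IH //.
rewrite !opoly_scaleS !qpochS /bcoef /lcoef /qint.
have -> : (2 * n.+1).-1 = (n.+1 + n)%N by lia.
rewrite exprD !exprS; move: (opoly_scale n) (qpoch q n) (q ^+ n) => C P t.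
by field; rewrite subq_neq0.
Qed.

Definition opoly_qmoment n k : R :=
  if n is m.+1 then
    qfact q k * opoly_scale n * (q ^+ k - (1 - (1 - q) * q ^+ n) / q) *
    \prod_(j < m) (q ^+ k - q ^+ j.+1)
  else qfact q k.

Lemma opoly_qmomentSS n k : opoly_qmoment n.+2 k =
  opoly_qmoment n.+1 k.+1 - bcoef q n.+1 * opoly_qmoment n.+1 k -
  lcoef q n.+1 * opoly_qmoment n k.
Proof.
case: n => [|n].
  rewrite /= !big_ord1 !big_ord0 qfactS !opoly_scaleS /opoly_scale big_ord0.
  rewrite /bcoef /lcoef /qint /= !exprS !expr0 !mulr1.
  by field; rewrite subq_neq0.
rewrite /opoly_qmoment [q ^+ k.+1]exprS prod_qshift !big_ord_recr /= !qfactS.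
rewrite !opoly_scaleS /bcoef /lcoef /qint.
have -> : (2 * n.+2).-1 = (n.+2 + n.+1)%N by lia.
rewrite exprD !exprS expr0 mulr1.
by field; rewrite q_neq0 subq_neq0.
Qed.

Lemma moment_fun_Xn_opoly k n :
  moment_fun (qfact q) ('X^k * opoly q n) = opoly_qmoment n k.
Proof.
elim/ltn_ind: n k => -[|[|n]] IH k.
- by rewrite mulr1 moment_funXn.
- rewrite opoly1 mulrBr -exprSr mulrC mul_polyC moment_funB moment_funZ !moment_funXn.
  rewrite /= big_ord0 qfactS /opoly_scale big_ord1 /qint expr1 mulr1 exprS.
  by field; rewrite q_neq0 subq_neq0.
have -> : 'X^k * opoly q n.+2 = 'X^(k.+1) * opoly q n.+1 -
    bcoef q n.+1 *: ('X^k * opoly q n.+1) - lcoef q n.+1 *: ('X^k * opoly q n).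
  by rewrite opolySS -!mul_polyC exprS; ring.
by rewrite !moment_funB !moment_funZ !IH // opoly_qmomentSS.
Qed.

Lemma opoly_qmoment_eq0 n k : (0 < k < n)%N -> opoly_qmoment n k = 0.
Proof.
case: n k => [|n] [|k] //= lt_kn.
by rewrite (bigD1 (@Ordinal n k lt_kn)) //= subrr mul0r mulr0.
Qed.

Lemma mu_mom_Xn_opoly k n :
  (k < n)%N -> moment_fun mu_mom ('X^k * opoly q n) = 0.
Proof.
rewrite moment_fun_mu_mom moment_fun_Xn_opoly coefXnM.
case: k => [|k] lt_kn /=; last by rewrite opoly_qmoment_eq0 // mulr0 add0r mulr0.
case: n lt_kn => // n _; rewrite -horner_coef0 opoly_horner0 /= qpochS.
rewrite /qfact big_ord0 expr0 mul1r (_ : \prod_(j < n) _ = qpoch q n) //.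
by field.
Qed.

Lemma mu_mom_opoly_orth m n :
  (m < n)%N -> moment_fun mu_mom (opoly q m * opoly q n) = 0.
Proof.
move=> lt_mn; apply: moment_fun_mul_eq0 => [k|]; first exact: mu_mom_Xn_opoly.
exact: leq_trans (size_opoly m) lt_mn.
Qed.

Lemma mu_integral_opoly_orth m n : m <> n ->
  mu_integral_is q (fun x => (opoly q m).[x] * (opoly q n).[x]) 0.
Proof.
move=> neq_mn; rewrite (_ : (fun x => _) = fun x => (opoly q m * opoly q n).[x]).
  have [lt_mn|lt_nm|//] := ltngtP m n.
    by rewrite -(mu_mom_opoly_orth _ _ lt_mn); exact: mu_integral_poly.
  by rewrite mulrC -(mu_mom_opoly_orth _ _ lt_nm); exact: mu_integral_poly.
by apply/funext => x; rewrite hornerM.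
Qed.

End QMoments.

Theorem proposition1 (R : realType) (q : R) (hq0 : 0 < q) (hq1 : q < 1) :
  (forall m n : nat, m <> n ->
     mu_integral_is q (fun x => (opoly q m).[x] * (opoly q n).[x]) 0)
  /\ mu_integral_is q (fun x => x ^+ 0) 1
  /\ (forall n : nat, (1 <= n)%N ->
     mu_integral_is q (fun x => x ^+ n) (q * qfact q n)).
Proof.
split; first exact: mu_integral_opoly_orth.
split; first exact: (@mu_integral_Xn R q hq0 hq1 0).
by case=> // n _; exact: (@mu_integral_Xn R q hq0 hq1 n.+1).
Qed.
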